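(* Let $n\ge2$ and $w\in\widetilde{\mathfrak S}_n$. A total order $\rho$ of $\mathrm{Inv}_2(w)$ is a reflection order of $w$ if and only if both of the following hold: (i) for each $[x,y,z]\in\binom{\mathbb Z}{3}_n$, the restriction of $\rho$ to $P([x,y,z])\cap\mathrm{Inv}_2(w)$ is either a prefix of $P([x,y,z])$ listed in lex order, or a suffix of $P([x,y,z])$ listed in antilex order; (ii) for each pair $[x,y],[x,y+n]\in\mathrm{Inv}_2(w)$, the element $[x,y]$ appears before $[x,y+n]$ in $\rho$.
   Context: The affine symmetric group $\widetilde{\mathfrak S}_n$ consists of bijections $w:\mathbb Z\to\mathbb Z$ with $w(x+n)=w(x)+n$ and $\sum_{i=1}^n w(i)=\binom{n+1}{2}$, under composition; $s_i$ ($i\in\mathbb Z/n\mathbb Z$) swaps $j,j+1$ for all $j\equiv i\pmod n$ and fixes other integers; a reduced word for $w$ is a shortest sequence $i_1\cdots i_\ell$ with $s_{i_1}\cdots s_{i_\ell}=w$. The reflection order of a reduced word $i_1\cdots i_\ell$ is $(\rho_1,\dots,\rho_\ell)$ with $\rho_j=(w^{(j)}(i_j),w^{(j)}(i_j+1))$, $w^{(j)}=s_{i_1}\cdots s_{i_{j-1}}$; reflection orders of $w$ are those of its reduced words, viewed as total orders of $\mathrm{Inv}_2(w)$ by identifying $(a,b)$ with $[a,b]$. $\binom{\mathbb Z}{m}_n$ is the set of $m$-subsets of $\mathbb Z$ with pairwise distinct residues mod $n$, modulo simultaneous translation by multiples of $n$ (for $m>1$), each written $[x_1,\dots,x_m]$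 with $x_1<\dots<x_m$. For $X=[x_1,\dots,x_m]$, $X_i$ is $X$ with $x_i$ removed; $P(X)=\{X_1,\dots,X_m\}$, lex order $(X_m,\dots,X_1)$, antilex order $(X_1,\dots,X_m)$; a prefix is a set $\{X_m,\dots,X_i\}$, a suffix a set $\{X_i,\dots,X_1\}$ (empty set counts as both). $\mathrm{Inv}_2(w)=\{[x,y]\in\binom{\mathbb Z}{2}_n: w^{-1}(x)>w^{-1}(y)\}$. *)

From HB Require Import structures.
From mathcomp Require Import all_boot all_order all_algebra.
Set Implicit Arguments. Unset Strict Implicit. Unset Printing Implicit Defensive.
Import Order.TTheory GRing.Theory Num.Theory.
Local Open Scope ring_scope.

Definition is_affine_perm (n : nat) (w : int -> int) : Prop :=
  bijective w /\ (forall x : int, w (x + n%:Z) = w x + n%:Z) /\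
  \sum_(i < n) w (i.+1)%:Z = ('C(n.+1, 2))%:Z.

(* The generator s_i, i in Z/nZ represented by i : 'I_n:
   swaps j and j+1 for all j = i (mod n). *)
Definition sgen (n : nat) (i : 'I_n) (j : int) : int :=
  if modz j n%:Z == modz (i : nat)%:Z n%:Z then j + 1
  else if modz (j - 1) n%:Z == modz (i : nat)%:Z n%:Z then j - 1 else j.

Definition word_prod (n : nat) (ws : seq 'I_n) : int -> int :=
  foldr (fun i f => sgen i \o f) id ws.

Definition is_word_for (n : nat) (w : int -> int) (ws : seq 'I_n) : Prop :=
  forall x : int, word_prod ws x = w x.

Definition is_reduced_word (n : nat) (w : int -> int) (ws : seq 'I_n) : Prop :=
  is_word_for w ws /\ forall ws' : seq 'I_n, is_word_for w ws' -> (size ws <= size ws')%N.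

(* Canonical representative of the class [min a b, max a b] in binom(Z,2)_n
   (modulo translation by multiples of n): first coordinate in [0, n). *)
Definition cls2 (n : nat) (a b : int) : int * int :=
  let x := Num.min a b in let y := Num.max a b in
  let k := divz x n%:Z in (x - k * n%:Z, y - k * n%:Z).

(* Reflection order of a word: rho_j = (w^(j)(i_j), w^(j)(i_j + 1)),
   w^(j) = s_{i_1} ... s_{i_(j-1)}, as (canonical) classes. *)
Fixpoint refl_aux (n : nat) (f : int -> int) (ws : seq 'I_n) : seq (int * int) :=
  match ws with
  | [::] => [::]
  | i :: t => cls2 n (f (i : nat)%:Z) (f ((i : nat)%:Z + 1)) :: refl_aux (f \o sgen i) t
  end.

Definition reflection_seq (n : nat) (ws : seq 'I_n) : seq (int * int) :=
  @refl_aux n id ws.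
Arguments reflection_seq n ws : clear implicits.

(* p (a canonical representative) belongs to Inv_2(w):
   [x,y] with x < y, distinct residues, w^{-1}(x) > w^{-1}(y). *)
Definition is_inv2 (n : nat) (w : int -> int) (p : int * int) : Prop :=
  (0 <= p.1 < n%:Z) /\ p.1 < p.2 /\ modz p.1 n%:Z != modz p.2 n%:Z /\
  exists a b : int, w a = p.1 /\ w b = p.2 /\ b < a.

(* A total order of Inv_2(w), given as the list of its elements in order. *)
Definition is_total_order_inv2 (n : nat) (w : int -> int) (rho : seq (int * int)) : Prop :=
  uniq rho /\ forall p, p \in rho <-> is_inv2 n w p.

Definition is_reflection_order (n : nat) (w : int -> int) (rho : seq (int * int)) : Prop :=
  exists ws : seq 'I_n, is_reduced_word w ws /\ reflection_seq n ws = rho.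

(* For X = [x,y,z]: X_3 = [x,y], X_2 = [x,z], X_1 = [y,z];
   lex order (X_3,X_2,X_1), antilex order (X_1,X_2,X_3).  A prefix in lex order
   is a take of the lex list; a suffix in antilex order is a take of the
   antilex list. *)
Definition cond_triples (n : nat) (rho : seq (int * int)) : Prop :=
  forall x y z : int, x < y -> y < z ->
    modz x n%:Z != modz y n%:Z -> modz x n%:Z != modz z n%:Z ->
    modz y n%:Z != modz z n%:Z ->
    let lexl := [:: cls2 n x y; cls2 n x z; cls2 n y z] in
    let alexl := [:: cls2 n y z; cls2 n x z; cls2 n x y] in
    let r := [seq p <- rho | p \in lexl] in
    exists k : nat, r = take k lexl \/ r = take k alexl.

Definition cond_pairs (n : nat) (rho : seq (int * int)) : Prop :=
  forall x y : int, x < y -> modz x n%:Z != modz y n%:Z ->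
    cls2 n x y \in rho -> cls2 n x (y + n%:Z) \in rho ->
    (index (cls2 n x y) rho < index (cls2 n x (y + n%:Z)) rho)%N.

From mathcomp Require Import all_boot all_order all_algebra.
From mathcomp Require Import zify.
Import Order.TTheory GRing.Theory Num.Theory.
Set Implicit Arguments. Unset Strict Implicit. Unset Printing Implicit Defensive.

(* Right multiplication by s_i toggles exactly one pair in Inv_2, the reflection
   [w(i), w(i+1)]; hence, when its reflections are distinct, the j-th prefix of the
   reflection sequence of a word is Inv_2 of the product of its first j letters.
   Writing g = w^-1, the inversions among the three pairs of a triple x < y < z are
   governed by the order of g x, g y, g z, so the inversion set is biclosed there:
   [x,z] is inverted if [x,y] and [y,z] are, and only if one of them is.  Read along
   the successive prefixes this is condition (i); condition (ii) holds because
   g (y + n) < g x forces g y < g x.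

   Conversely, let (x, y) be the last pair of rho.  By (ii), g x <= g y + n, for
   otherwise [x - n, y] is inverted and listed after [x - n, y - n] = [x, y].  If
   g x > g y + 1, then z := w (g y + 1) has a residue different from those of x and
   y, and whatever the position of z with respect to x < y, the triple through x, y
   and z violates biclosedness of rho without its last pair, which (i) forbids.  So
   g x = g y + 1: (x, y) is the reflection of a right descent s_i, Inv_2(w s_i) is rho
   without its last pair, and induction ends at a permutation without inversions,
   which the normalisation forces to be the identity.  The word so obtained has
   distinct reflections while every word for w lists all of Inv_2(w) among its
   reflections, hence it is reduced. *)

(** * Prefixes meeting the pairs of a triple *)

Section Triples.
Variables (T : eqType) (A B C : T).

Definition lex_antilex_prefix (s : seq T) : Prop :=
  exists k, s = take k [:: A; B; C] \/ s = take k [:: C; B; A].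

Definition biclosed3 (s : seq T) : bool :=
  ((B \in s) ==> (A \in s) || (C \in s)) && ((A \in s) ==> (C \in s) ==> (B \in s)).

Lemma biclosed3_filter (s : seq T) :
  biclosed3 [seq p <- s | p \in [:: A; B; C]] = biclosed3 s.
Proof. by rewrite /biclosed3 !mem_filter !inE !eqxx !orbT. Qed.

Lemma lex_antilex_prefix_take m s : lex_antilex_prefix s -> lex_antilex_prefix (take m s).
Proof. by case=> k [] ->; exists (minn m k); [left | right]; rewrite take_min. Qed.

Lemma lex_antilex_prefix_belast s e :
  lex_antilex_prefix (rcons s e) -> lex_antilex_prefix s.
Proof. by move/(lex_antilex_prefix_take (size s)); rewrite -cats1 take_size_cat. Qed.

Hypotheses (nAB : A != B) (nAC : A != C) (nBC : B != C).

Let distinctE :=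
  (negPf nAB, negPf nAC, negPf nBC, eq_sym B A, eq_sym C A, eq_sym C B).

Lemma biclosed3_lex_antilex_prefix s : lex_antilex_prefix s -> biclosed3 s.
Proof.
by case=> -[|[|[|k]]] [] -> /=; rewrite /biclosed3 ?inE ?distinctE ?eqxx ?orbT.
Qed.

Lemma lex_antilex_prefix_rcons s e :
  lex_antilex_prefix s -> e \in [:: A; B; C] -> e \notin s ->
  biclosed3 (rcons s e) -> lex_antilex_prefix (rcons s e).
Proof.
case=> -[|[|[|k]]] [] -> /=; rewrite !inE => /or3P [] /eqP ->;
  rewrite /biclosed3 ?inE ?distinctE ?eqxx ?orbT //= => _ _;
  by [exists 1; left | exists 1; right | exists 2; left | exists 2; right
     | exists 3; left | exists 3; right].
Qed.
End Triples.

Lemma filter_take_prefix (T : Type) (p : pred T) (s : seq T) j :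
  exists j', filter p (take j s) = take j' (filter p s).
Proof.
exists (size (filter p (take j s))).
by rewrite -{3}(cat_take_drop j s) filter_cat take_size_cat.
Qed.

Lemma take_rcons_minn (T : Type) (s : seq T) e j :
  take j s = take (minn j (size s)) (rcons s e).
Proof. by rewrite -cats1 takel_cat ?geq_minr // take_min take_size. Qed.

Lemma biclosed3_prefixesP (T : eqType) (A B C : T) (s : seq T) :
  A != B -> A != C -> B != C -> uniq s ->
  (forall j, biclosed3 A B C (take j s)) <->
  lex_antilex_prefix A B C [seq p <- s | p \in [:: A; B; C]].
Proof.
move=> nAB nAC nBC s_uniq; split.
- elim/last_ind: s s_uniq => [|s e IH]; first by exists 0; left.
  rewrite rcons_uniq => /andP [e_notin s_uniq] closed.
  have IHs : lex_antilex_prefix A B C [seq p <- s | p \in [:: A; B; C]].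
    by apply: IH => // j; rewrite (take_rcons_minn s e); exact: closed.
  move: (closed (size (rcons s e))); rewrite take_size -biclosed3_filter filter_rcons.
  case: ifP => // e_in; apply: lex_antilex_prefix_rcons => //.
  by rewrite mem_filter negb_and e_notin orbT.
- move=> sL j; rewrite -biclosed3_filter.
  have [j' ->] := filter_take_prefix (mem [:: A; B; C]) s j.
  exact/biclosed3_lex_antilex_prefix/lex_antilex_prefix_take.
Qed.

Local Open Scope ring_scope.

(** * Affine generators and inversion sets *)

Lemma modzDMr (a k N : int) : ((a + k * N) %% N)%Z = (a %% N)%Z.
Proof. by rewrite addrC; apply/eqP; rewrite modzMDl. Qed.

Lemma eqz_mod_shift (N a b : int) :
  (a %% N)%Z = (b %% N)%Z -> exists k, b = a + k * N.
Proof.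
move=> eab; exists ((b %/ N)%Z - (a %/ N)%Z).
have := divz_eq a N; have := divz_eq b N; rewrite eab; lia.
Qed.

Lemma eqz_mod_gap (N a b : int) : 0 < N -> (a %% N)%Z = (b %% N)%Z ->
  a = b \/ a + N <= b \/ b + N <= a.
Proof.
move=> N_gt0 /eqz_mod_shift [k ->].
have [k_lt0 | k_gt0 | ->] := ltgtP k 0; last by left; rewrite mul0r addr0.
- by right; right; nia.
- by right; left; nia.
Qed.

Lemma neqz_mod_lt (N a b : int) : 0 < N -> a < b -> b < a + N ->
  (a %% N)%Z != (b %% N)%Z.
Proof. by move=> N_gt0 ab ba; apply/eqP => /(eqz_mod_gap N_gt0); lia. Qed.

Definition periodic (n : nat) (f : int -> int) : Prop :=
  forall x, f (x + n%:Z) = f x + n%:Z.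

Section Periodic.
Variables (n : nat) (f g : int -> int).
Hypotheses (fK : cancel f g) (gK : cancel g f) (f_per : periodic n f).

Lemma periodicMz x k : f (x + k * n%:Z) = f x + k * n%:Z.
Proof.
have f_nat (m : nat) y : f (y + m%:Z * n%:Z) = f y + m%:Z * n%:Z.
  elim: m => [|m IHm]; first by rewrite !mul0r !addr0.
  have -> : y + m.+1%:Z * n%:Z = y + m%:Z * n%:Z + n%:Z by lia.
  by rewrite f_per IHm; lia.
case: k => m; first exact: f_nat.
have := f_nat m.+1 (x + Negz m * n%:Z).
have -> : x + Negz m * n%:Z + m.+1%:Z * n%:Z = x by rewrite NegzE; lia.
by rewrite NegzE; lia.
Qed.

Lemma periodic_inv : periodic n g.
Proof. by move=> y; apply: (can_inj fK); rewrite f_per !gK. Qed.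

Lemma periodic_modz a b :
  (f a %% n%:Z)%Z = (f b %% n%:Z)%Z <-> (a %% n%:Z)%Z = (b %% n%:Z)%Z.
Proof.
split=> /eqz_mod_shift [k eab]; last by rewrite eab periodicMz modzDMr.
have -> : b = a + k * n%:Z by apply: (can_inj fK); rewrite periodicMz.
by rewrite modzDMr.
Qed.

End Periodic.

Lemma periodic_comp n (f h : int -> int) :
  periodic n f -> periodic n h -> periodic n (f \o h).
Proof. by move=> f_per h_per x /=; rewrite h_per f_per. Qed.

Section Generators.
Variables (n : nat) (i : 'I_n).
Let I := (i : nat)%:Z.

Variant sgen_spec x : int -> Type :=
  | SgenUp of (x %% n%:Z)%Z = (I %% n%:Z)%Z : sgen_spec x (x + 1)
  | SgenDown of ((x - 1) %% n%:Z)%Z = (I %% n%:Z)%Z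
      & (x %% n%:Z)%Z <> (I %% n%:Z)%Z : sgen_spec x (x - 1)
  | SgenFix of (x %% n%:Z)%Z <> (I %% n%:Z)%Z
      & ((x - 1) %% n%:Z)%Z <> (I %% n%:Z)%Z : sgen_spec x x.

Lemma sgenP x : sgen_spec x (sgen i x).
Proof.
rewrite /sgen; case: eqP => [/SgenUp // | x_ne].
by case: eqP => [/SgenDown | /(SgenFix x_ne)]; apply.
Qed.

Lemma sgen_periodic : periodic n (sgen i).
Proof.
move=> x; rewrite /sgen modzDr.
have -> : x + n%:Z - 1 = x - 1 + n%:Z by lia.
by rewrite modzDr; case: eqP => _; [|case: eqP => _]; lia.
Qed.

Lemma sgen_up b : (b %% n%:Z)%Z = (I %% n%:Z)%Z -> sgen i b = b + 1.
Proof. by rewrite /sgen => ->; rewrite eqxx. Qed.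

Lemma sgen_fix x : (x %% n%:Z)%Z <> (I %% n%:Z)%Z ->
  ((x - 1) %% n%:Z)%Z <> (I %% n%:Z)%Z -> sgen i x = x.
Proof. by rewrite /sgen; do 2 case: eqP => //. Qed.

Hypothesis n_gt1 : (1 < n)%N.

Lemma sgen_down b : (b %% n%:Z)%Z = (I %% n%:Z)%Z -> sgen i (b + 1) = b.
Proof.
move=> b_i; case: (sgenP (b + 1)) => [bS_i | _ _ | _]; last by rewrite addrK => /(_ b_i).
- have : (b %% n%:Z)%Z != ((b + 1) %% n%:Z)%Z by apply: neqz_mod_lt; lia.
  by rewrite b_i bS_i eqxx.
- by lia.
Qed.

Lemma sgenK : involutive (sgen i).
Proof.
move=> x; case: (sgenP x) => [x_i | x_i _ | ]; first exact: sgen_down.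
- by rewrite sgen_up // subrK.
- exact: sgen_fix.
Qed.

Lemma sgen_ltr a b : b < a -> ~ (a = b + 1 /\ (b %% n%:Z)%Z = (I %% n%:Z)%Z) ->
  sgen i b < sgen i a.
Proof.
move=> ba not_swap.
case: (sgenP b) => [b_i | b_i b_ni | b_ni b_ni']; case: (sgenP a) => [a_i | a_i a_ni | a_ni a_ni'];
  try lia.
- have := eqz_mod_gap (N := n%:Z) (a := b) (b := a - 1) ltac:(lia) (etrans b_i (esym a_i)).
  by have [ab | ] := eqVneq a (b + 1); [case: not_swap | lia].
- by have [eb | ] := eqVneq b (a - 1); [case: b_ni; rewrite eb | lia].
Qed.

End Generators.

Definition canonical2 (n : nat) (p : int * int) : Prop :=
  (0 <= p.1 < n%:Z) /\ p.1 < p.2 /\ (p.1 %% n%:Z)%Z != (p.2 %% n%:Z)%Z.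

Lemma is_inv2_ext n f1 f2 p : f1 =1 f2 -> is_inv2 n f1 p <-> is_inv2 n f2 p.
Proof.
suff imp g1 g2 : g1 =1 g2 -> is_inv2 n g1 p -> is_inv2 n g2 p.
  by move=> e12; split; apply: imp.
by move=> e12 [? [? [? [a [b [ea [eb ba]]]]]]]; do 3 split=> //; exists a, b; rewrite -!e12.
Qed.

Lemma is_inv2_id n p : ~ is_inv2 n id p.
Proof. by case=> _ [p12 [_ [a [b [/= -> [/= -> ba]]]]]]; lia. Qed.

Section Pairs.
Variable n : nat.

Lemma cls2C a b : cls2 n a b = cls2 n b a.
Proof. by rewrite /cls2 minC maxC. Qed.

Lemma cls2_le a b : a <= b ->
  cls2 n a b = (a - (a %/ n%:Z)%Z * n%:Z, b - (a %/ n%:Z)%Z * n%:Z).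
Proof. by move=> ab; rewrite /cls2 (min_idPl ab) (max_idPr ab). Qed.

Lemma cls2_canonical p : canonical2 n p -> cls2 n p.1 p.2 = p.
Proof.
case: p => a b [/= a_range [ab _]].
by rewrite cls2_le ?ltW // divz_small ?absz_nat // mul0r !subr0.
Qed.

Lemma cls2_eq_modz a b a' b' : a < b -> a' < b' -> cls2 n a b = cls2 n a' b' ->
  (a %% n%:Z)%Z = (a' %% n%:Z)%Z /\ b - a = b' - a'.
Proof.
move=> ab ab'; rewrite !cls2_le ?ltW // => -[e1 e2]; split; last lia.
have -> : a = a' + ((a %/ n%:Z)%Z - (a' %/ n%:Z)%Z) * n%:Z by lia.
exact: modzDMr.
Qed.

Lemma cls2_triple_neq x y z : x < y -> y < z ->
  (x %% n%:Z)%Z != (y %% n%:Z)%Z ->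
  [/\ cls2 n x y != cls2 n x z, cls2 n x y != cls2 n y z & cls2 n x z != cls2 n y z].
Proof.
move=> xy yz x_ny; have xz : x < z by lia.
split; apply/eqP.
- by move/(cls2_eq_modz xy xz) => [_]; lia.
- by move/(cls2_eq_modz xy yz) => [x_y _]; move/eqP: x_ny.
- by move/(cls2_eq_modz xz yz) => [x_y _]; move/eqP: x_ny.
Qed.

Hypothesis n_gt1 : (1 < n)%N.

Lemma cls2_shift a b k : cls2 n (a + k * n%:Z) (b + k * n%:Z) = cls2 n a b.
Proof.
wlog ab : a b / a <= b.
  by move=> sym; case: (lerP a b) => [/sym // | /ltW/sym]; rewrite cls2C [cls2 n b a]cls2C.
rewrite !cls2_le ?lerD2r // [a + _]addrC divzMDl; last lia.
by congr pair; lia.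
Qed.

Lemma canonical2_cls2 a b : (a %% n%:Z)%Z != (b %% n%:Z)%Z -> canonical2 n (cls2 n a b).
Proof.
wlog ab : a b / a <= b.
  by move=> sym; case: (lerP a b) => [/sym // | /ltW/sym]; rewrite cls2C eq_sym.
move=> a_nb; rewrite cls2_le //; split=> /=.
  have := divz_eq a n%:Z; have := modz_ge0 a (d := n%:Z); have := ltz_pmod a (d := n%:Z).
  lia.
have a_ne_b : a != b by apply: contraNneq a_nb => ->.
by split; [lia | rewrite -!mulNr !modzDMr].
Qed.

End Pairs.

Section Inversions.
Variables (n : nat) (f g : int -> int).
Hypotheses (n_gt1 : (1 < n)%N) (fK : cancel f g) (gK : cancel g f) (f_per : periodic n f).

Lemma is_inv2E p : is_inv2 n f p <-> canonical2 n p /\ g p.2 < g p.1.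
Proof.
split=> [[p1 [p12 [p_n [a [b [<- [<- ba]]]]]]] | [[p1 [p12 p_n]] gp]].
  by rewrite !fK.
by do 3 split=> //; exists (g p.1), (g p.2); rewrite !gK.
Qed.

Lemma is_inv2_cls2 a b : a < b -> (a %% n%:Z)%Z != (b %% n%:Z)%Z ->
  is_inv2 n f (cls2 n a b) <-> g b < g a.
Proof.
move=> ab a_nb; rewrite is_inv2E.
have := canonical2_cls2 n_gt1 a_nb; rewrite cls2_le ?ltW //= => can_ab.
have g_shift x k : g (x - k * n%:Z) = g x - k * n%:Z.
  by rewrite -!mulNr (periodicMz (periodic_inv fK gK f_per)).
by rewrite !g_shift; split=> [[_] | ?]; [lia | split=> //; lia].
Qed.

End Inversions.

Section RightMultiplication.
Variables (n : nat) (f g : int -> int) (i : 'I_n).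
Hypotheses (n_gt1 : (1 < n)%N) (fK : cancel f g) (gK : cancel g f) (f_per : periodic n f).
Let I := (i : nat)%:Z.
Let c := cls2 n (f I) (f (I + 1)).
Let fsK := can_comp fK (sgenK i n_gt1).
Let fsK' := can_comp (sgenK i n_gt1) gK.
Let fs_per := periodic_comp f_per (sgen_periodic i).

Lemma cls2_swap_modz b : (b %% n%:Z)%Z = (I %% n%:Z)%Z -> cls2 n (f b) (f (b + 1)) = c.
Proof.
case/esym/eqz_mod_shift=> k ->; have -> : I + k * n%:Z + 1 = I + 1 + k * n%:Z by lia.
by rewrite !(periodicMz f_per) cls2_shift.
Qed.

Lemma is_inv2_sgen_eq : is_inv2 n (f \o sgen i) c <-> ~ is_inv2 n f c.
Proof.
have I_I1 : (f I %% n%:Z)%Z != (f (I + 1) %% n%:Z)%Z.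
  by apply/eqP; rewrite (periodic_modz fK f_per); apply/eqP/neqz_mod_lt; lia.
have I1_I : (f (I + 1) %% n%:Z)%Z != (f I %% n%:Z)%Z by rewrite eq_sym.
have sI : sgen i I = I + 1 by rewrite sgen_up.
have sI1 : sgen i (I + 1) = I by rewrite sgen_down.
rewrite /c; case: (ltgtP (f I) (f (I + 1))) => [lt | gt | /(can_inj fK)]; last by lia.
  rewrite (is_inv2_cls2 n_gt1 fsK fsK' fs_per lt I_I1) (is_inv2_cls2 n_gt1 fK gK f_per lt I_I1).
  by rewrite /= !fK sI sI1; lia.
rewrite cls2C (is_inv2_cls2 n_gt1 fsK fsK' fs_per gt I1_I) (is_inv2_cls2 n_gt1 fK gK f_per gt I1_I).
by rewrite /= !fK sI sI1; lia.
Qed.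

Lemma is_inv2_sgen_neq p : p <> c -> is_inv2 n (f \o sgen i) p <-> is_inv2 n f p.
Proof.
move=> p_nc; rewrite (is_inv2E _ fsK fsK') (is_inv2E _ fK gK) /=.
suff sgen_inv : canonical2 n p -> sgen i (g p.2) < sgen i (g p.1) <-> g p.2 < g p.1.
  by split=> -[can_p lt]; split=> //; apply/(sgen_inv can_p).
move=> can_p; have p_cls2 := cls2_canonical can_p; case: can_p => _ [p12 _].
have not_swap x y : cls2 n x y = p -> ~ (g y = g x + 1 /\ (g x %% n%:Z)%Z = (I %% n%:Z)%Z).
  by move=> xy_p [gy gx]; apply: p_nc; rewrite -xy_p -(cls2_swap_modz gx) -gy !gK.
split=> [lt_s | lt]; last by apply: (sgen_ltr n_gt1 lt); apply: not_swap; rewrite cls2C.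
case: (ltgtP (g p.2) (g p.1)) => // [lt | /(can_inj gK)]; last by lia.
by have := sgen_ltr n_gt1 lt (not_swap _ _ p_cls2); lia.
Qed.

Lemma is_inv2_sgen p :
  is_inv2 n (f \o sgen i) p <-> if p == c then ~ is_inv2 n f p else is_inv2 n f p.
Proof.
by case: eqP => [-> | p_nc]; [exact: is_inv2_sgen_eq | exact: is_inv2_sgen_neq].
Qed.

End RightMultiplication.

(** * Reflection sequences of words *)

Section Words.
Variables (n : nat).
Hypothesis n_gt1 : (1 < n)%N.
Implicit Types (ws : seq 'I_n) (j : 'I_n).

Lemma word_prod_rcons ws j : word_prod (rcons ws j) =1 word_prod ws \o sgen j.
Proof. by elim: ws => [|i ws IHws] x //=; rewrite IHws. Qed.

Lemma word_prod_bij ws : bijective (word_prod ws).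
Proof.
elim: ws => [|i ws [g wK gK]]; first by exists id.
by exists (g \o sgen i) => x /=; rewrite ?wK ?gK sgenK.
Qed.

Lemma word_prod_periodic ws : periodic n (word_prod ws).
Proof. by elim: ws => [|i ws IHws] //; apply: periodic_comp (sgen_periodic i) IHws. Qed.

Lemma refl_aux_rcons (f : int -> int) ws j :
  refl_aux f (rcons ws j) =
  rcons (refl_aux f ws) (cls2 n (f (word_prod ws (j : nat)%:Z)) (f (word_prod ws ((j : nat)%:Z + 1)))).
Proof. by elim: ws f => [|i ws IHws] f //=; rewrite IHws. Qed.

Lemma refl_aux_take (f : int -> int) ws k : refl_aux f (take k ws) = take k (refl_aux f ws).
Proof. by elim: ws f k => [|i ws IHws] f [|k] //=; rewrite IHws. Qed.

Lemma size_refl_aux (f : int -> int) ws : size (refl_aux f ws) = size ws.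
Proof. by elim: ws f => [|i ws IHws] f //=; rewrite IHws. Qed.

Lemma is_inv2_word_prod_rcons ws j p :
  let c := cls2 n (word_prod ws (j : nat)%:Z) (word_prod ws ((j : nat)%:Z + 1)) in
  is_inv2 n (word_prod (rcons ws j)) p <->
  (if p == c then ~ is_inv2 n (word_prod ws) p else is_inv2 n (word_prod ws) p).
Proof.
move=> c; rewrite (is_inv2_ext _ _ (word_prod_rcons ws j)).
have [g wK gK] := word_prod_bij ws.
exact: (is_inv2_sgen j n_gt1 wK gK (word_prod_periodic ws) p).
Qed.

Lemma is_inv2_word_prod_sub ws p :
  is_inv2 n (word_prod ws) p -> p \in reflection_seq n ws.
Proof.
elim/last_ind: ws => [|ws j IHws] in p *; first by move/is_inv2_id.
rewrite /reflection_seq refl_aux_rcons mem_rcons in_cons is_inv2_word_prod_rcons.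
by case: eqP => // _ /IHws ->; rewrite orbT.
Qed.

Lemma is_inv2_word_prodE ws p : uniq (reflection_seq n ws) ->
  is_inv2 n (word_prod ws) p <-> p \in reflection_seq n ws.
Proof.
elim/last_ind: ws => [|ws j IHws] in p *.
  by move=> _; split=> [/is_inv2_id | ].
rewrite /reflection_seq refl_aux_rcons rcons_uniq mem_rcons in_cons is_inv2_word_prod_rcons.
case/andP=> c_notin /IHws inv_ws; case: eqP => [-> | _]; last exact: inv_ws.
by split=> // _; rewrite inv_ws; apply/negP.
Qed.

End Words.

Lemma index_ltn_take (T : eqType) (s : seq T) a b : b \in s -> a != b ->
  (forall k, b \in take k s -> a \in take k s) -> (index a s < index b s)%N.
Proof.
move=> b_in a_nb /(_ (index b s).+1); rewrite in_take // ltnSn => /(_ isT) a_in.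
have a_s : a \in s := mem_take a_in.
move: a_in; rewrite in_take // ltnS leq_eqVlt => /orP [/eqP idx_ab | //].
by move: a_nb; rewrite -(nth_index a a_s) idx_ab nth_index ?eqxx.
Qed.

Section ReflectionSeq.
Variables (n : nat) (ws : seq 'I_n).
Hypotheses (n_gt1 : (1 < n)%N) (ws_uniq : uniq (reflection_seq n ws)).
Let rho := reflection_seq n ws.

Lemma take_reflection_seqE k : exists g : int -> int, periodic n g /\
  forall a b, a < b -> (a %% n%:Z)%Z != (b %% n%:Z)%Z ->
    (cls2 n a b \in take k rho) = (g b < g a).
Proof.
have [g wK gK] := word_prod_bij n_gt1 (take k ws).
have w_per := word_prod_periodic (take k ws).
exists g; split=> [|a b ab a_nb]; first exact: periodic_inv wK gK w_per.
have take_k : reflection_seq n (take k ws) = take k rho by exact: refl_aux_take.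
have inv2_k p : is_inv2 n (word_prod (take k ws)) p <-> p \in take k rho.
  by rewrite -take_k; apply: is_inv2_word_prodE; rewrite // take_k take_uniq.
have inv2_ab := is_inv2_cls2 n_gt1 wK gK w_per ab a_nb.
by apply/idP/idP => [/inv2_k/inv2_ab | /inv2_ab/inv2_k].
Qed.

Lemma reflection_seq_cond_pairs : cond_pairs n rho.
Proof.
move=> x y xy x_ny A_in D_in.
have x_nyn : (x %% n%:Z)%Z != ((y + n%:Z) %% n%:Z)%Z by rewrite modzDr.
apply: index_ltn_take => // [|k].
  by apply/eqP => /(cls2_eq_modz xy) => /(_ ltac:(lia)) [_]; lia.
have [g [g_per memE]] := take_reflection_seqE k.
by rewrite !memE // ?g_per; lia.
Qed.

Lemma reflection_seq_cond_triples : cond_triples n rho.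
Proof.
move=> x y z xy yz x_ny x_nz y_nz /=; have xz : x < z by lia.
have [nAB nAC nBC] := cls2_triple_neq xy yz x_ny.
apply/biclosed3_prefixesP => // k.
have [g [_ memE]] := take_reflection_seqE k.
by rewrite /biclosed3 !memE //; lia.
Qed.

End ReflectionSeq.

Lemma reduced_word_of_uniq n (w : int -> int) (ws : seq 'I_n) : (1 < n)%N ->
  is_word_for w ws -> uniq (reflection_seq n ws) -> is_reduced_word w ws.
Proof.
move=> n_gt1 ws_w ws_uniq; split=> // ws' ws'_w.
rewrite -(size_refl_aux id ws) -(size_refl_aux id ws'); apply: uniq_leq_size => // p.
move/(is_inv2_word_prodE n_gt1 _ ws_uniq) => inv_p; apply: (is_inv2_word_prod_sub n_gt1).
by apply/(is_inv2_ext _ _ (fun x => etrans (ws'_w x) (esym (ws_w x)))).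
Qed.

(** * Recovering a reduced word *)

(* The normalisation of ~S_n reads [disp_sum n w 1 = 0]; as s_i only permutes the
   window [i, i + n), this form is stable under right multiplication by s_i. *)
Definition disp_sum (n : nat) (f : int -> int) (a : int) : int :=
  \sum_(k < n) (f (a + k%:Z) - (a + k%:Z)).

Lemma sum_affine_perm n (f : int -> int) :
  \sum_(k < n) f k.+1%:Z = disp_sum n f 1 + ('C(n.+1, 2))%:Z.
Proof.
have sum_nat m : \sum_(k < m) k.+1%:Z = ('C(m.+1, 2))%:Z.
  elim: m => [|m IHm]; first by rewrite big_ord0.
  by rewrite big_ord_recr /= IHm [in RHS]binS bin1 PoszD.
rewrite /disp_sum -sum_nat -big_split; apply: eq_bigr => k _ /=.
have -> : 1 + (k : nat)%:Z = k.+1%:Z by lia.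
lia.
Qed.

Section DisplacementSum.
Variables (n : nat) (f : int -> int).
Hypothesis n_gt1 : (1 < n)%N.

Lemma disp_sum_sgen_window (i : 'I_n) :
  disp_sum n (f \o sgen i) (i : nat)%:Z = disp_sum n f (i : nat)%:Z.
Proof.
case: n n_gt1 i => [|[|n']] // n_gt1' i.
have bump0S k : bump 0 k = k.+1 by [].
rewrite /disp_sum !big_ord_recl /= !bump0S !addr0 sgen_up // sgen_down // !addrA.
congr (_ + _); first by rewrite -[(1%N)%:Z]/(1 : int); lia.
apply: eq_bigr => k _; have k_lt := ltn_ord k; rewrite !bump0S sgen_fix //=.
- by apply/eqP; rewrite eq_sym; apply: neqz_mod_lt; lia.
- by apply/eqP; rewrite eq_sym; apply: neqz_mod_lt; lia.
Qed.

Hypothesis f_per : periodic n f.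

Lemma disp_sumS a : disp_sum n f (a + 1) = disp_sum n f a.
Proof.
case: n n_gt1 f_per => // n' _ f_per'.
rewrite /disp_sum big_ord_recr big_ord_recl /= addr0.
have -> : a + 1 + n'%:Z = a + n'.+1%:Z by lia.
rewrite f_per' addrC; congr (_ + _); first lia.
by apply: eq_bigr => k _; rewrite /bump /=; congr (f _ - _); lia.
Qed.

Lemma disp_sum_nat (m : nat) : disp_sum n f m%:Z = disp_sum n f 0.
Proof.
elim: m => [//|m IHm].
have -> : m.+1%:Z = m%:Z + 1 by lia.
by rewrite disp_sumS.
Qed.

End DisplacementSum.

Lemma disp_sum_sgen n (f : int -> int) (i : 'I_n) : (1 < n)%N -> periodic n f ->
  disp_sum n (f \o sgen i) 1 = disp_sum n f 1.
Proof.
move=> n_gt1 f_per.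
have fs_per := periodic_comp f_per (sgen_periodic i).
rewrite -[1%R]/(1%N%:Z) !disp_sum_nat // -(disp_sum_nat n_gt1 fs_per i).
by rewrite disp_sum_sgen_window // (disp_sum_nat n_gt1 f_per).
Qed.

Lemma int_ord_decomp n (a : int) : (0 < n)%N ->
  exists (i : 'I_n) (k : int), a = (i : nat)%:Z + k * n%:Z.
Proof.
move=> n_gt0; have n_gt0' : 0 < n%:Z by lia.
have mod_lt : (absz (a %% n%:Z)%Z < n)%N.
  by have := modz_ge0 a (d := n%:Z); have := ltz_pmod a n_gt0'; lia.
exists (Ordinal mod_lt), (a %/ n%:Z)%Z => /=.
by have := modz_ge0 a (d := n%:Z); have := divz_eq a n%:Z; lia.
Qed.

Lemma homo_bij_shift (w g : int -> int) : cancel w g -> cancel g w ->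
  {homo w : a b / a < b} -> forall x, w x = x + w 0.
Proof.
move=> wK gK w_lt.
have wS a : w (a + 1) = w a + 1.
  set t := g (w a + 1); have wt : w t = w a + 1 by rewrite gK.
  have [a1_lt | a1_gt | -> //] := ltgtP (a + 1) t.
    by have := w_lt _ _ a1_lt; have := w_lt a (a + 1); lia.
  have : t <= a by lia.
  by rewrite le_eqVlt => /orP [/eqP ta | /w_lt]; [move: wt; rewrite ta | ]; lia.
have w_nat (m : nat) : w m%:Z = m%:Z + w 0 /\ w (- m%:Z) = - m%:Z + w 0.
  elim: m => [|m [IHp IHn]]; first by rewrite oppr0 add0r.
  have := wS m%:Z; have := wS (- m.+1%:Z).
  have -> : - m.+1%:Z + 1 = - m%:Z by lia.
  have -> : m%:Z + 1 = m.+1%:Z by lia.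
  by lia.
by case=> m; [case: (w_nat m) | rewrite NegzE; case: (w_nat m.+1)].
Qed.

Section NoInversions.
Variables (n : nat) (w g : int -> int).
Hypotheses (n_gt1 : (1 < n)%N) (wK : cancel w g) (gK : cancel g w) (w_per : periodic n w).
Hypothesis no_inv2 : forall p, ~ is_inv2 n w p.

Lemma no_inv2_homo : {homo w : a b / a < b}.
Proof.
move=> a b ab; case: (ltrP (w a) (w b)) => // wba; exfalso.
have [w_ab | w_nab] := eqVneq (w b %% n%:Z)%Z (w a %% n%:Z)%Z.
  move/(periodic_modz wK w_per): w_ab => /esym/eqz_mod_shift [k b_eq].
  have := periodicMz w_per a k; rewrite -b_eq.
  have : w b != w a by apply: contraTneq ab => /(can_inj wK) ->; rewrite ltxx.
  nia.
have wba' : w b < w a by rewrite lt_neqAle wba andbT; apply: contraNneq w_nab => ->.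
by apply: (@no_inv2 (cls2 n (w b) (w a))); rewrite (is_inv2_cls2 n_gt1 wK gK w_per) // !wK.
Qed.

Lemma no_inv2_id : disp_sum n w 1 = 0 -> w =1 id.
Proof.
have w_shift := homo_bij_shift wK gK no_inv2_homo.
have -> : disp_sum n w 1 = w 0 * n%:Z.
  rewrite /disp_sum (eq_bigr (fun=> w 0)) => [|k _]; last by rewrite w_shift; lia.
  by rewrite sumr_const card_ord -mulr_natr natz.
by move/eqP; rewrite mulf_eq0 => /orP [/eqP w0 x | /eqP]; [rewrite w_shift w0 addr0 | lia].
Qed.

End NoInversions.

Section LastReflection.
Variables (n : nat) (w g : int -> int) (r : seq (int * int)) (x y : int).
Hypotheses (n_gt1 : (1 < n)%N) (wK : cancel w g) (gK : cancel g w) (w_per : periodic n w).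
Let rho := rcons r (x, y).
Hypotheses (rho_uniq : uniq rho) (rho_inv2 : forall p, p \in rho <-> is_inv2 n w p).

Lemma mem_rho_cls2 a b : a < b -> (a %% n%:Z)%Z != (b %% n%:Z)%Z ->
  (cls2 n a b \in rho) = (g b < g a).
Proof.
move=> ab a_nb; have inv2_ab := is_inv2_cls2 n_gt1 wK gK w_per ab a_nb.
by apply/idP/idP => [/rho_inv2/inv2_ab | /inv2_ab/rho_inv2].
Qed.

Lemma last_inv2 : canonical2 n (x, y) /\ g y < g x.
Proof. by apply/(is_inv2E _ wK gK)/rho_inv2; rewrite mem_rcons mem_head. Qed.

Lemma mem_belast p : (p \in r) = (p != (x, y)) && (p \in rho).
Proof.
move: rho_uniq; rewrite /rho rcons_uniq mem_rcons in_cons => /andP [xy_notin _].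
by case: (eqVneq p (x, y)) => [-> | _]; rewrite ?(negPf xy_notin).
Qed.

Lemma mem_belast_cls2 a b : a < b -> (a %% n%:Z)%Z != (b %% n%:Z)%Z ->
  (cls2 n a b \in r) = (cls2 n a b != (x, y)) && (g b < g a).
Proof. by move=> ab a_nb; rewrite mem_belast mem_rho_cls2. Qed.

Lemma belast_inv2 (i : 'I_n) : cls2 n (w (i : nat)%:Z) (w ((i : nat)%:Z + 1)) = (x, y) ->
  forall p, p \in r <-> is_inv2 n (w \o sgen i) p.
Proof.
move=> c_xy p; rewrite mem_belast (is_inv2_sgen i n_gt1 wK gK w_per) c_xy.
case: eqP => [-> | _] /=; last exact: rho_inv2.
have xy_inv : is_inv2 n w (x, y) by apply/rho_inv2; rewrite mem_rcons mem_head.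
by split=> // /(_ xy_inv).
Qed.

Hypothesis rho_pairs : cond_pairs n rho.

Lemma last_le : g x <= g y + n%:Z.
Proof.
have [[_ [xy x_ny]] gyx] := last_inv2; rewrite /= in xy x_ny.
rewrite leNgt; apply/negP => gx_far.
set x' := x + (-1) * n%:Z; set y' := y + (-1) * n%:Z.
have x'y' : x' < y' by lia.
have x'_ny' : (x' %% n%:Z)%Z != (y' %% n%:Z)%Z by rewrite !modzDMr.
have x'_ny : (x' %% n%:Z)%Z != (y %% n%:Z)%Z by rewrite !modzDMr.
have := rho_pairs x'y' x'_ny'; rewrite (_ : y' + n%:Z = y); last by lia.
rewrite cls2_shift // (cls2_canonical (proj1 last_inv2)).
have xy_in : (x, y) \in rho by rewrite mem_rcons mem_head.
have D_in : cls2 n x' y \in rho.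
  by rewrite mem_rho_cls2 //; [rewrite (periodicMz (periodic_inv wK gK w_per)); lia | lia].
move=> /(_ xy_in D_in).
have := index_mem (cls2 n x' y) rho; rewrite D_in size_rcons ltnS.
have idx_last : index (x, y) rho = size r.
  move: rho_uniq; rewrite /rho rcons_uniq => /andP [xy_notin _].
  by rewrite -cats1 index_cat (negPf xy_notin) /= eqxx addn0.
by rewrite idx_last => D_le; rewrite ltnNge D_le.
Qed.

Hypothesis rho_triples : cond_triples n rho.

Lemma biclosed3_belast a b c : a < b -> b < c -> (a %% n%:Z)%Z != (b %% n%:Z)%Z ->
  (a %% n%:Z)%Z != (c %% n%:Z)%Z -> (b %% n%:Z)%Z != (c %% n%:Z)%Z ->
  biclosed3 (cls2 n a b) (cls2 n a c) (cls2 n b c) r.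
Proof.
move=> ab bc a_nb a_nc b_nc; have [nAB nAC nBC] := cls2_triple_neq ab bc a_nb.
have := iffRL (biclosed3_prefixesP nAB nAC nBC rho_uniq) (rho_triples ab bc a_nb a_nc b_nc).
by move/(_ (size r)); rewrite /rho -cats1 take_size_cat.
Qed.

Lemma last_descent : g x = g y + 1.
Proof.
have [[_ [xy x_ny]] gyx] := last_inv2; rewrite /= in xy x_ny.
have xy_cls2 : cls2 n x y = (x, y) := cls2_canonical (proj1 last_inv2).
have gx_le := last_le.
case: (ltrP (g y + 1) (g x)) => [gx_far | ]; last by lia.
have g_per := periodic_inv wK gK w_per.
set z := w (g y + 1); have gz : g z = g y + 1 by rewrite /z wK.
have z_nx : (z %% n%:Z)%Z != (x %% n%:Z)%Z.
  by apply/eqP => /(periodic_modz gK g_per); rewrite gz; apply/eqP/neqz_mod_lt; lia.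
have z_ny : (z %% n%:Z)%Z != (y %% n%:Z)%Z.
  by apply/eqP => /(periodic_modz gK g_per); rewrite gz => /esym; apply/eqP/neqz_mod_lt; lia.
have [zx | xz | zx] := ltgtP z x; last by move: z_nx; rewrite zx eqxx.
  have [_ d2 d3] := cls2_triple_neq zx xy z_nx; rewrite xy_cls2 in d2 d3.
  have := biclosed3_belast zx xy z_nx z_ny x_ny.
  by rewrite /biclosed3 !mem_belast_cls2 ?(lt_trans zx xy) // xy_cls2 eqxx d2 d3 /=; lia.
rewrite eq_sym in z_nx; have [zy | yz | zy] := ltgtP z y; last by move: z_ny; rewrite zy eqxx.
  have [d1 _ d3] := cls2_triple_neq xz zy z_nx.
  rewrite xy_cls2 in d1; rewrite xy_cls2 eq_sym in d3.
  have := biclosed3_belast xz zy z_nx x_ny z_ny.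
  by rewrite /biclosed3 !mem_belast_cls2 // xy_cls2 eqxx d1 d3 /=; lia.
rewrite eq_sym in z_ny; have [d1 d2 _] := cls2_triple_neq xy yz x_ny.
rewrite xy_cls2 eq_sym in d1; rewrite xy_cls2 eq_sym in d2.
have := biclosed3_belast xy yz x_ny z_nx z_ny.
by rewrite /biclosed3 !mem_belast_cls2 ?(lt_trans xy yz) // xy_cls2 eqxx d1 d2 /=; lia.
Qed.

Lemma last_reflection_descent :
  exists i : 'I_n, cls2 n (w (i : nat)%:Z) (w ((i : nat)%:Z + 1)) = (x, y).
Proof.
have [i [k gy_eq]] := int_ord_decomp (g y) (ltnW n_gt1); exists i.
have wI : w (i : nat)%:Z = y + (- k) * n%:Z.
  by rewrite -(gK y) -(periodicMz w_per) gy_eq mulNr addrK.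
have wI1 : w ((i : nat)%:Z + 1) = x + (- k) * n%:Z.
  by rewrite -(gK x) -(periodicMz w_per) last_descent gy_eq; congr w; lia.
by rewrite wI wI1 cls2C cls2_shift // (cls2_canonical (proj1 last_inv2)).
Qed.

End LastReflection.

Lemma cond_triples_belast n (r : seq (int * int)) e :
  cond_triples n (rcons r e) -> cond_triples n r.
Proof.
move=> triples a b c ab bc a_nb a_nc b_nc /=.
move: (triples a b c ab bc a_nb a_nc b_nc); rewrite /= filter_rcons; case: ifP => // _.
exact: lex_antilex_prefix_belast.
Qed.

Lemma cond_pairs_belast n (r : seq (int * int)) e :
  cond_pairs n (rcons r e) -> cond_pairs n r.
Proof.
move=> pairs a b ab a_nb A_in D_in; have := pairs a b ab a_nb.
by rewrite -!cats1 !index_cat A_in D_in !mem_cat A_in D_in; apply.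
Qed.

Lemma reflection_word_of_conds n (rho : seq (int * int)) : (1 < n)%N ->
  forall w g, cancel w g -> cancel g w -> periodic n w -> disp_sum n w 1 = 0 ->
  uniq rho -> (forall p, p \in rho <-> is_inv2 n w p) ->
  cond_triples n rho -> cond_pairs n rho ->
  exists ws, is_word_for w ws /\ reflection_seq n ws = rho.
Proof.
move=> n_gt1; elim/last_ind: rho => [|r [x y] IHr] w g wK gK w_per w_disp rho_uniq rho_inv2 triples pairs.
  exists [::]; split=> // z; apply/esym/(no_inv2_id n_gt1 wK gK w_per) => // p.
  by move/rho_inv2.
have [i c_xy] := last_reflection_descent n_gt1 wK gK w_per rho_uniq rho_inv2 pairs triples.
have r_inv2 := belast_inv2 n_gt1 wK gK w_per rho_uniq rho_inv2 c_xy.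
have s_inv := sgenK i n_gt1.
have ws_per := periodic_comp w_per (sgen_periodic i).
have ws_disp : disp_sum n (w \o sgen i) 1 = 0 by rewrite disp_sum_sgen.
have r_uniq : uniq r by move: rho_uniq; rewrite rcons_uniq => /andP [].
have [ws [ws_w ws_r]] := IHr _ _ (can_comp wK s_inv) (can_comp s_inv gK) ws_per ws_disp
  r_uniq r_inv2 (cond_triples_belast triples) (cond_pairs_belast pairs).
exists (rcons ws i); split=> [z | ]; first by rewrite word_prod_rcons /= ws_w /= s_inv.
rewrite /reflection_seq refl_aux_rcons -/(reflection_seq n ws) ws_r !ws_w /=.
by rewrite sgen_up // sgen_down // cls2C c_xy.
Qed.

Local Close Scope ring_scope.

Theorem corollary4p2 (n : nat) (w : int -> int) (rho : seq (int * int)) :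
  (2 <= n)%N -> is_affine_perm n w -> is_total_order_inv2 n w rho ->
  (is_reflection_order n w rho <-> cond_triples n rho /\ cond_pairs n rho).
Proof.
move=> n_gt1 [[g wK gK] [w_per w_sum]] [rho_uniq rho_inv2]; split.
  case=> ws [[ws_w _] ws_rho]; rewrite -ws_rho in rho_uniq *.
  by split; [exact: reflection_seq_cond_triples | exact: reflection_seq_cond_pairs].
case=> triples pairs.
have w_disp : disp_sum n w 1 = 0 by move: w_sum; rewrite sum_affine_perm; lia.
have [ws [ws_w ws_rho]] :=
  reflection_word_of_conds n_gt1 wK gK w_per w_disp rho_uniq rho_inv2 triples pairs.
by exists ws; split=> //; apply: reduced_word_of_uniq; rewrite ?ws_rho.
Qed.
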